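(* Consider LocalOMD with positive sampling policy $\mu^s$. Let $C_\Psi=\sup_{x\in\mathcal X,\,p\in\Delta_{\mathcal A(x)}}D_x(p,\mu^1(\cdot|x))$ and let $\lambda_1\ge0$ be such that $\frac1{\eta^{t+1}(x)}-\frac1{\eta^t(x)}\le\lambda_1$ for all $x\in\mathcal X$ and $t\in[T]$. Then for all $t\in[T]$ and $h\in[H]$, \[\tilde\ell^t_h(a^t_h)\le(1+\lambda_1C_\Psi)\,\kappa(\mu^s|x^t_h).\]
   Context: Game structure. Fix an integer $H\ge1$. The min-player's information sets form a finite set $\mathcal X$; each $x$ has a depth $h(x)\in\{1,\dots,H\}$ and a finite nonempty action set $\mathcal A(x)$. Perfect recall: every $x$ of depth $h$ has a unique history $(x_1,a_1,\dots,x_{h-1},a_{h-1},x_h=x)$ with $x_i$ of depth $i$, $a_i\in\mathcal A(x_i)$; $x'$ directly follows $(x,a)$ if $h(x')=h(x)+1$ and the history of $x'$ contains $x$ followed by $a$; $x$ is in the history of $x'$ if $x=x'_i$ for some $i$ (including $x=x'$). A policy is $\mu=(\mu(\cdot|x))_x$ with $\mu(\cdot|x)\in\Delta_{\mathcal A(x)}$; $\Pi_{\min}$ the set of policies; positive if all $\mu(a|x)>0$. For $x$ of depth $h$ and $(x',a')$ with $x$ in the history of $x'$, $x'$ of depth $h'$ with history $(x'_1,a'_1,\dots,x'_{h'})$, $a'_{h'}=a'$: $\mu_{h:}(x',a')=\prod_{i=h}^{h'}\mu(a'_i|x'_i)$. $\kappa(\mu^s|x)=\max_{\mu\in\Pi_{\min}}\sum_{x':\,x\text{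 in history of }x'}\sum_{a'\in\mathcal A(x')}\mu_{h:}(x',a')/\mu^s_{h:}(x',a')$. Trajectories: at each round $t$ the min-player observes $(x^t_h,a^t_h,\ell^t_h)_{h=1}^H$ with $x^t_h$ of depth $h$, $a^t_h\in\mathcal A(x^t_h)$, $x^t_{h+1}$ directly following $(x^t_h,a^t_h)$, and $\ell^t_h\in[0,1]$. LocalOMD. For each $x$, $\Psi_x$ is a Legendre function on a closed convex set $\overline{\Omega_x}\subset\mathbb R^{|\mathcal A(x)|}_{\ge0}$ containing $\Delta_{\mathcal A(x)}$ (interior $\Omega_x$), with Bregman divergence $D_x(p,q)=\Psi_x(p)-\Psi_x(q)-\langle\nabla\Psi_x(q),p-q\rangle$. Learning rates $\eta^t(x)>0$ ($t=1,\dots,T+1$), non-increasing in $t$, with $\eta^{t+1}(x)=\eta^t(x)$ whenever $x\ne x^t_{h(x)}$. Given $\mu^1$ with $\mu^1(\cdot|x)\in\Omega_x$, at round $t$: $q^t_{H+1}=0$; for $h=H,\dots,1$, with $x=x^t_h$, $\tilde\ell^t_h\in\mathbb R^{\mathcal A(x)}$, $\tilde\ell^t_h(a)=\mathbf 1\{a=a^t_h\}(\ell^t_h+q^t_{h+1})/\mu^s(a^t_h|x)$, $h^t_x(p)=\langle\tilde\ell^t_h,p\rangle+\frac1{\eta^t(x)}D_x(p,\mu^t(\cdot|x))+\big(\frac1{\eta^{t+1}(x)}-\frac1{\eta^t(x)}\big)D_x(p,\mu^1(\cdot|x))$ on $\Delta_{\mathcal A(x)}$, $\mu^{t+1}(\cdot|x)=\arg\min_{\Delta_{\mathcal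 A(x)}}h^t_x$ (assumed to exist uniquely in $\Omega_x$), $q^t_h=\min_{\Delta_{\mathcal A(x)}}h^t_x$; for $x$ not on the trajectory, $\mu^{t+1}(\cdot|x)=\mu^t(\cdot|x)$. *)

From HB Require Import structures.
From mathcomp Require Import all_boot all_order all_algebra.
From mathcomp Require Import boolp classical_sets reals.
Unset Printing Implicit Defensive.
Import Order.TTheory GRing.Theory Num.Theory.
Local Open Scope ring_scope.
Local Open Scope classical_set_scope.

Section Vectors.
Variables (R : realType) (T : finType).
Implicit Types (p q v : T -> R) (S : set (T -> R)).

Definition vnorm v : R := \big[Num.max/0]_(a : T) `|v a|.
Definition vsub p q : T -> R := fun a => p a - q a.
Definition dotv p q : R := \sum_(a : T) p a * q a.
Definition in_simplex p : Prop := (forall a, 0 <= p a) /\ \sum_(a : T) p a = 1.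

Definition interior S : set (T -> R) :=
  [set q | exists2 d : R, 0 < d & forall p, vnorm (vsub p q) < d -> S p].
Definition closed_set S : Prop :=
  forall q, (forall e : R, 0 < e -> exists p, S p /\ vnorm (vsub p q) < e) -> S q.
Definition convex_set S : Prop :=
  forall p q (l : R), S p -> S q -> 0 <= l <= 1 ->
    S (fun a => l * p a + (1 - l) * q a).

Definition admissible_domain S : Prop :=
  [/\ closed_set S, convex_set S, (forall p, S p -> forall a, 0 <= p a)
    & (forall p, in_simplex p -> S p)].

Definition is_gradient (Psi : (T -> R) -> R) (g q : T -> R) : Prop :=
  forall e : R, 0 < e -> exists2 d : R, 0 < d & forall v, vnorm v < d ->
    `|Psi (fun a => q a + v a) - Psi q - dotv g v| <= e * vnorm v.

Definition legendre S (Psi : (T -> R) -> R) (gPsi : (T -> R) -> (T -> R)) : Prop :=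
  [/\ (forall p q (l : R), S p -> S q -> 0 <= l <= 1 ->
         Psi (fun a => l * p a + (1 - l) * q a) <= l * Psi p + (1 - l) * Psi q),
      (forall p q (l : R), interior S p -> interior S q -> p <> q -> 0 < l < 1 ->
         Psi (fun a => l * p a + (1 - l) * q a) < l * Psi p + (1 - l) * Psi q),
      (forall q, interior S q -> is_gradient Psi (gPsi q) q),
      (forall q, interior S q -> forall e : R, 0 < e -> exists2 d : R, 0 < d &
         forall p, interior S p -> vnorm (vsub p q) < d ->
           vnorm (vsub (gPsi p) (gPsi q)) < e)
    & (forall (qs : nat -> T -> R) b, (forall n, interior S (qs n)) -> S b ->
         ~ interior S b ->
         (forall e : R, 0 < e -> exists N, forall n, (N <= n)%N -> vnorm (vsub (qs n) b) < e) ->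
         forall M : R, exists N, forall n, (N <= n)%N -> M < vnorm (gPsi (qs n)))].

Definition breg (Psi : (T -> R) -> R) (gPsi : (T -> R) -> (T -> R)) p q : R :=
  Psi p - Psi q - dotv (gPsi q) (vsub p q).

End Vectors.

Arguments vnorm {R T}. Arguments vsub {R T}. Arguments dotv {R T}.
Arguments in_simplex {R T}. Arguments interior {R T}. Arguments closed_set {R T}.
Arguments convex_set {R T}. Arguments admissible_domain {R T}.
Arguments is_gradient {R T}. Arguments legendre {R T}. Arguments breg {R T}.

Section Game.
Variables (R : realType) (X : finType) (A : X -> finType)
  (dep : X -> nat) (par : X -> option {x : X & A x}).

(* Game structure with perfect recall: par x = Some (y, a) means x directly
   follows (y, a); depth-1 information sets have no parent. *)
Definition game_structure (H : nat) : Prop :=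
  [/\ (forall x, (1 <= dep x <= H)%N),
      (forall x, (0 < #|{: A x}|)%N)
    & (forall x, match par x with
                 | None => dep x = 1%N
                 | Some (existT y _) => dep x = (dep y).+1 end)].

Definition up (x : X) : X :=
  match par x with Some (existT y _) => y | None => x end.

Definition in_hist (x x' : X) : bool :=
  (dep x <= dep x')%N && (iter (dep x' - dep x) up x' == x).

Definition policy (mu : forall x, A x -> R) : Prop := forall x, in_simplex (mu x).

(* product of mu along the last n.+1 steps of the history of (x', a') *)
Fixpoint pprod (mu : forall x, A x -> R) (n : nat) (x' : X) (a' : A x') : R :=
  mu x' a' * match n with
             | 0%N => 1
             | n'.+1 => match par x' with
                        | Some (existT y b) => pprod mu n' y b
                        | None => 1 end end.

Definition reach (mu : forall x, A x -> R) (x x' : X) (a' : A x') : R :=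
  pprod mu (dep x' - dep x) x' a'.

(* kappa(mus | x) = max over policies (written as sup; the max is attained) *)
Definition kappa (mus : forall x, A x -> R) (x : X) : R :=
  sup [set v : R | exists mu, policy mu /\
         v = \sum_(x' : X | in_hist x x') \sum_(a' : A x') reach mu x x' a' / reach mus x x' a'].

Definition trajectories (H T : nat) (xs : nat -> nat -> X)
  (acts : forall t h, A (xs t h)) (loss : nat -> nat -> R) : Prop :=
  forall t, (1 <= t <= T)%N ->
    (forall h, (1 <= h <= H)%N -> dep (xs t h) = h /\ 0 <= loss t h <= 1) /\
    (forall h, (1 <= h < H)%N -> par (xs t h.+1) = Some (existT _ (xs t h) (acts t h))).

Definition learning_rates (T : nat) (xs : nat -> nat -> X) (eta : nat -> X -> R) : Prop :=
  forall x,
    (forall t, (1 <= t <= T.+1)%N -> 0 < eta t x) /\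
    (forall t, (1 <= t <= T)%N -> eta t.+1 x <= eta t x) /\
    (forall t, (1 <= t <= T)%N -> x <> xs t (dep x) -> eta t.+1 x = eta t x).

Section Run.
Variables (H T : nat) (Omega : forall x, set (A x -> R))
  (Psi : forall x, (A x -> R) -> R) (gPsi : forall x, (A x -> R) -> (A x -> R))
  (mus : forall x, A x -> R) (eta : nat -> X -> R)
  (xs : nat -> nat -> X) (acts : forall t h, A (xs t h)) (loss : nat -> nat -> R)
  (mu : nat -> forall x, A x -> R) (q : nat -> nat -> R).

Definition ltilde (t h : nat) : A (xs t h) -> R :=
  fun a => if a == acts t h then (loss t h + q t h.+1) / mus (xs t h) a else 0.

Definition hobj (t : nat) (x : X) (l : A x -> R) (p : A x -> R) : R :=
  dotv l p + (eta t x)^-1 * breg (Psi x) (gPsi x) p (mu t x)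
  + ((eta t.+1 x)^-1 - (eta t x)^-1) * breg (Psi x) (gPsi x) p (mu 1%N x).

Definition localOMD_run : Prop :=
  (forall x, in_simplex (mu 1%N x) /\ interior (Omega x) (mu 1%N x)) /\
  forall t, (1 <= t <= T)%N ->
    [/\ q t H.+1 = 0,
        (forall h, (1 <= h <= H)%N ->
           let x := xs t h in
           [/\ in_simplex (mu t.+1 x), interior (Omega x) (mu t.+1 x),
               (forall p, in_simplex p -> hobj t x (ltilde t h) (mu t.+1 x) <= hobj t x (ltilde t h) p),
               (forall p, in_simplex p -> hobj t x (ltilde t h) p <= hobj t x (ltilde t h) (mu t.+1 x) ->
                  p = mu t.+1 x)
             & q t h = hobj t x (ltilde t h) (mu t.+1 x)])
      & (forall x, x <> xs t (dep x) -> mu t.+1 x = mu t x)].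

End Run.
End Game.

Arguments game_structure {X A}. Arguments up {X A}. Arguments in_hist {X A}.
Arguments policy {R X A}. Arguments pprod {R X A}. Arguments reach {R X A}.
Arguments kappa {R X A}. Arguments trajectories {R X A}. Arguments learning_rates {R X}.
Arguments ltilde {R X A}. Arguments hobj {R X A}. Arguments localOMD_run {R X A}.

From HB Require Import structures.
From mathcomp Require Import all_boot all_order all_algebra.
From mathcomp Require Import boolp classical_sets reals.
From mathcomp Require Import zify ring lra.
Import Order.TTheory GRing.Theory Num.Theory.
Local Open Scope ring_scope.

(* Fix a round t and write x_j, a_j for the trajectory, S_j = l_j + q_{j+1}
   for the loss-to-go fed to depth j, and r_j = mu^t(a_j|x_j) / mu^s(a_j|x_j).
   Comparing the minimiser mu^{t+1}(.|x_j) of the LocalOMD objective with the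
   feasible point mu^t(.|x_j) gives q_j <= r_j S_j + lambda1 C_Psi, hence the
   backward recursion S_j <= 1 + lambda1 C_Psi + r_{j+1} S_{j+1}, which unrolls to
   S_h <= (1 + lambda1 C_Psi) sum_{k=h}^{H} prod_{j=h+1}^{k} r_j.
   Dividing by mu^s(a_h|x_h) gives the estimate l~_h(a_h).  Each summand is the
   ratio mu_{h:}(x_k,a_k) / mu^s_{h:}(x_k,a_k) for the policy that plays a_h at
   x_h and follows mu^t elsewhere; since the x_k are distinct descendants of
   x_h, the sum is at most one of the sums whose supremum is kappa(mu^s|x_h). *)

Section Basics.
Variable R : realType.

Lemma simplex_le1 (T : finType) (p : T -> R) a : in_simplex p -> 0 <= p a <= 1.
Proof.
case=> p_ge0 p_sum; rewrite p_ge0 /= -p_sum (bigD1 a) //= lerDl.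
by apply: sumr_ge0 => b _.
Qed.

Lemma breg_self (T : finType) (Ps : (T -> R) -> R) (g : (T -> R) -> (T -> R)) p :
  breg Ps g p p = 0.
Proof.
rewrite /breg /dotv /vsub big1 ?subrr ?subr0 // => a _.
by rewrite subrr mulr0.
Qed.

Lemma bregman_radius_ge0 (T : finType) (Ps : (T -> R) -> R)
    (g : (T -> R) -> (T -> R)) (p0 : T -> R) (C : R) :
  in_simplex p0 -> (forall p, in_simplex p -> breg Ps g p p0 <= C) -> 0 <= C.
Proof. by move=> p0_simplex C_bound; rewrite -(breg_self _ Ps g p0) C_bound. Qed.

Lemma sum_sub_le (I : finType) (P Q : pred I) (F : I -> R) :
  (forall i, 0 <= F i) -> {subset P <= Q} -> \sum_(i | P i) F i <= \sum_(i | Q i) F i.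
Proof.
move=> F_ge0 PQ; rewrite [leRHS](bigID P) /=.
rewrite (eq_bigl P) ?lerDl ?sumr_ge0 // => i.
by apply/andP/idP => [[]//|Pi]; split; [exact: PQ|].
Qed.

Lemma backward_sum_bound (S r : nat -> R) (c : R) (h H : nat) :
  0 <= c -> (forall j, 0 <= r j) -> S H <= 1 ->
  (forall j, (h <= j < H)%N -> S j <= 1 + c + r j.+1 * S j.+1) ->
  (h <= H)%N ->
  S h <= (1 + c) * \sum_(h <= k < H.+1) \prod_(h.+1 <= j < k.+1) r j.
Proof.
move=> c_ge0 r_ge0 S_H S_step hH.
suff: forall d j, (h <= j)%N -> (j + d = H)%N ->
    S j <= (1 + c) * \sum_(j <= k < H.+1) \prod_(j.+1 <= i < k.+1) r i.
  by apply; last exact: subnKC.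
elim=> [|d IH] j hj jdH.
  rewrite addn0 in jdH; rewrite jdH big_nat1 big_geq // mulr1; lra.
have shift : \sum_(j.+1 <= k < H.+1) \prod_(j.+1 <= i < k.+1) r i
    = r j.+1 * \sum_(j.+1 <= k < H.+1) \prod_(j.+2 <= i < k.+1) r i.
  rewrite big_distrr /=; apply: eq_big_nat => k /andP[jk _].
  by rewrite big_ltn.
rewrite big_ltn; last lia.
rewrite big_geq // shift.
apply: le_trans (S_step j (ltac:(lia))) _.
have := ler_wpM2l (r_ge0 j.+1) (IH j.+1 (ltac:(lia)) (ltac:(lia))).
set s := \sum_(_ <= _ < _) _; move=> IHr.
have -> : (1 + c) * (1 + r j.+1 * s) = 1 + c + r j.+1 * ((1 + c) * s) by ring.
by rewrite lerD2l.
Qed.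

End Basics.

Arguments simplex_le1 {R T p} a.
Arguments bregman_radius_ge0 {R T Ps g p0 C}.
Arguments backward_sum_bound {R}.

Section Policies.
Variables (R : realType) (X : finType) (A : X -> finType)
  (dep : X -> nat) (par : X -> option {x : X & A x}).

Lemma pprod_ge0 (m : forall x, A x -> R) : (forall x a, 0 <= m x a) ->
  forall n x a, 0 <= pprod par m n x a.
Proof.
move=> m_ge0; elim=> [|n IH] x a /=; first by rewrite mulr1.
by apply: mulr_ge0 => //; case: (par x) => [[y b]|].
Qed.

Lemma pprod_le1 (m : forall x, A x -> R) : policy m ->
  forall n x a, pprod par m n x a <= 1.
Proof.
move=> pol_m; have m01 x a : 0 <= m x a <= 1 := simplex_le1 a (pol_m x).
elim=> [|n IH] x a /=; first by rewrite mulr1; case/andP: (m01 x a).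
have /andP[m0 m1] := m01 x a; apply: mulr_ile1 => //.
  by case: (par x) => [[y b]|] //; apply: pprod_ge0 => z c; case/andP: (m01 z c).
by case: (par x) => [[y b]|].
Qed.

(* Any policy gives a lower bound for kappa: the set whose supremum defines
   kappa is bounded, each ratio being at most 1 / mu^s_{h:}. *)
Lemma kappa_ub (mus m : forall x, A x -> R) (x : X) :
  (forall y b, 0 <= mus y b) -> policy m ->
  \sum_(x' | in_hist dep par x x') \sum_(a' : A x')
     reach dep par m x x' a' / reach dep par mus x x' a' <= kappa dep par mus x.
Proof.
move=> mus_ge0 pol_m; apply: ub_le_sup; last by exists m.
exists (\sum_(x' | in_hist dep par x x') \sum_(a' : A x') (reach dep par mus x x' a')^-1).
move=> v [m' [pol_m' ->]]; apply: ler_sum => x' _; apply: ler_sum => a' _.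
rewrite -[leRHS]mul1r ler_wpM2r ?invr_ge0 ?pprod_ge0 //.
exact: pprod_le1.
Qed.

Definition force_action (m : forall x, A x -> R) (x0 : X) (a0 : A x0) :
    forall x, A x -> R :=
  fun x b => if x == x0 then (Tagged A b == Tagged A a0)%:R else m x b.
Arguments force_action m {x0} a0 x b.

Lemma force_action_policy (m : forall x, A x -> R) (x0 : X) (a0 : A x0) :
  policy m -> policy (force_action m a0).
Proof.
move=> pol_m x; rewrite /force_action; case: eqP => [->|_]; last exact: pol_m.
split=> [b|]; first exact: ler0n.
rewrite (bigD1 a0) //= eqxx big1 ?addr0 // => b ne_b.
by rewrite eq_Tagged (negbTE ne_b).
Qed.

Lemma force_action_at (m : forall x, A x -> R) (x0 : X) (a0 : A x0) :
  force_action m a0 x0 a0 = 1.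
Proof. by rewrite /force_action !eqxx. Qed.

Lemma force_action_off (m : forall x, A x -> R) (x0 : X) (a0 : A x0) x b :
  x != x0 -> force_action m a0 x b = m x b.
Proof. by rewrite /force_action => /negbTE ->. Qed.

End Policies.

Arguments force_action {R X A} m {x0} a0 x b.
Arguments kappa_ub {R X A} dep par {mus m} x.

Section Trajectory.
Variables (R : realType) (X : finType) (A : X -> finType)
  (dep : X -> nat) (par : X -> option {x : X & A x}) (H : nat)
  (xt : nat -> X) (at_ : forall h, A (xt h)).
Hypothesis dep_xt : forall h, (1 <= h <= H)%N -> dep (xt h) = h.
Hypothesis par_xt : forall h, (1 <= h < H)%N ->
  par (xt h.+1) = Some (existT _ (xt h) (at_ h)).

Lemma xt_inj j k : (1 <= j <= H)%N -> (1 <= k <= H)%N -> xt j = xt k -> j = k.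
Proof. by move=> jH kH E; rewrite -(dep_xt j jH) E dep_xt. Qed.

Lemma xt_neq h j : (1 <= h)%N -> (h < j <= H)%N -> xt j != xt h.
Proof.
move=> h1 hjH; apply/eqP => /xt_inj E.
have := E (ltac:(lia)) (ltac:(lia)); lia.
Qed.

Lemma iter_up_xt n i : (1 <= i)%N -> (i + n <= H)%N ->
  iter n (up par) (xt (i + n)) = xt i.
Proof.
elim: n => [|n IH] i1 inH; first by rewrite addn0.
rewrite iterSr addnS {2}/up par_xt; last lia.
by apply: IH; lia.
Qed.

Lemma in_hist_xt h k : (1 <= h <= k)%N -> (k <= H)%N -> in_hist dep par (xt h) (xt k).
Proof.
move=> hk kH; rewrite /in_hist !dep_xt; try lia.
have -> : (h <= k)%N by lia.
have {2}-> : k = (h + (k - h))%N by lia.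
by rewrite iter_up_xt ?eqxx //; lia.
Qed.

Lemma pprod_xt (m : forall x, A x -> R) n i : (1 <= i)%N -> (i + n <= H)%N ->
  pprod par m n (xt (i + n)) (at_ (i + n))
    = \prod_(i <= j < (i + n).+1) m (xt j) (at_ j).
Proof.
elim: n => [|n IH] i1 inH; first by rewrite addn0 /= mulr1 big_nat1.
rewrite addnS /= par_xt /=; last lia.
rewrite IH //; last lia.
by rewrite [RHS]big_nat_recr /=; [exact: mulrC | lia].
Qed.

Lemma reach_xt (m : forall x, A x -> R) h k : (1 <= h <= k)%N -> (k <= H)%N ->
  reach dep par m (xt h) (xt k) (at_ k) = \prod_(h <= j < k.+1) m (xt j) (at_ j).
Proof.
move=> hk kH; rewrite /reach !dep_xt; try lia.
have := pprod_xt m (k - h) h; rewrite subnKC; last lia.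
by apply; lia.
Qed.

Lemma sum_xt_le_hist (g : X -> R) h : (1 <= h)%N -> (forall x, 0 <= g x) ->
  \sum_(h <= k < H.+1) g (xt k) <= \sum_(x' | in_hist dep par (xt h) x') g x'.
Proof.
move=> h1 g_ge0; set ks := index_iota h H.+1.
have ks_uniq : uniq (map xt ks).
  rewrite map_inj_in_uniq ?iota_uniq // => k1 k2.
  rewrite !mem_index_iota => k1H k2H E.
  by apply: xt_inj E; lia.
rewrite -(big_map xt xpredT) big_uniq //; apply: sum_sub_le => // x' /mapP[k].
by rewrite mem_index_iota => kH ->; apply: in_hist_xt; lia.
Qed.

(* The importance weights of a policy m along the trajectory, summed over
   depths k >= h and divided by mu^s(a_h|x_h), are bounded by kappa: they are
   the trajectory terms of kappa's sum for the policy forcing a_h at x_h. *)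
Lemma kappa_ge_traj (mus m : forall x, A x -> R) h :
  (forall y b, 0 <= mus y b) -> policy m -> (1 <= h <= H)%N ->
  \sum_(h <= k < H.+1)
      (\prod_(h.+1 <= j < k.+1) (m (xt j) (at_ j) / mus (xt j) (at_ j)))
    / mus (xt h) (at_ h)
  <= kappa dep par mus (xt h).
Proof.
move=> mus_ge0 pol_m hH.
set m' := force_action m (at_ h).
have pol_m' : policy m' by apply: force_action_policy.
have ratio_ge0 x' a' : 0 <= reach dep par m' (xt h) x' a' / reach dep par mus (xt h) x' a'.
  by rewrite divr_ge0 ?pprod_ge0 // => y b; case: (pol_m' y) => ->.
pose g x' := \sum_(a' : A x') reach dep par m' (xt h) x' a' / reach dep par mus (xt h) x' a'.
have g_ge0 x' : 0 <= g x' by apply: sumr_ge0.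
have h1 : (1 <= h)%N by lia.
apply: le_trans (le_trans (sum_xt_le_hist g h h1 g_ge0) (kappa_ub dep par _ mus_ge0 pol_m')).
have m'_root : m' (xt h) (at_ h) = 1 by apply: force_action_at.
have m'_below j : (h < j <= H)%N -> m' (xt j) (at_ j) = m (xt j) (at_ j).
  by move=> hjH; rewrite /m' force_action_off // xt_neq; lia.
apply: ler_sum_nat => k hk.
rewrite /g (bigD1 (at_ k)) //= -[leLHS]addr0 lerD ?sumr_ge0 //.
rewrite le_eqVlt; apply/orP; left; apply/eqP.
have split_h (F : nat -> R) :
    \prod_(h <= j < k.+1) F j = F h * \prod_(h.+1 <= j < k.+1) F j.
  by rewrite big_ltn //; lia.
rewrite !reach_xt ?hH //; try lia.
rewrite !split_h m'_root mul1r (@eq_big_nat _ _ _ h.+1 k.+1 (fun j => m' (xt j) (at_ j))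
  (fun j => m (xt j) (at_ j))); last by move=> j hj; apply: m'_below; lia.
by rewrite prodf_div invfM; ring.
Qed.

End Trajectory.

Arguments kappa_ge_traj {R X A dep par H xt at_} dep_xt par_xt {mus m h}.

Section Run.
Variables (R : realType) (X : finType) (A : X -> finType)
  (dep : X -> nat) (par : X -> option {x : X & A x}) (H T : nat)
  (Omega : forall x, set (A x -> R))
  (Psi : forall x, (A x -> R) -> R) (gPsi : forall x, (A x -> R) -> (A x -> R))
  (mus : forall x, A x -> R) (eta : nat -> X -> R)
  (xs : nat -> nat -> X) (acts : forall t h, A (xs t h)) (loss : nat -> nat -> R)
  (mu : nat -> forall x, A x -> R) (q : nat -> nat -> R).
Hypothesis dep_range : forall x, (1 <= dep x <= H)%N.
Hypothesis run : localOMD_run dep H T Omega Psi gPsi mus eta xs acts loss mu q.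

Local Notation ltil := (ltilde mus xs acts loss q).

Lemma run_policy s : (1 <= s <= T.+1)%N -> policy (mu s).
Proof.
have [mu1 step] := run.
elim: s => [//|s IH] sT x.
have [->|s_gt0] := posnP s; first by case: (mu1 x).
have [_ on_traj off_traj] := step s (ltac:(lia)).
have [->|x_off] := eqVneq x (xs s (dep x)).
  by have [] := on_traj (dep x) (dep_range x).
by rewrite off_traj; [apply: IH; lia | exact/eqP].
Qed.

Lemma dotv_ltilde t h p : dotv (ltil t h) p = ltil t h (acts t h) * p (acts t h).
Proof.
rewrite /dotv (bigD1 (acts t h)) //= big1 ?addr0 // => b /negbTE b_off.
by rewrite /ltilde b_off mul0r.
Qed.

Hypothesis rates : learning_rates dep T xs eta.

(* One step of LocalOMD: evaluating the objective at the old iterate mu^t,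
   whose divergence term vanishes, bounds the optimal value q^t_h. *)
Lemma q_step_bound (CPsi lambda1 : R) t h :
  (forall x p, in_simplex p -> breg (Psi x) (gPsi x) p (mu 1%N x) <= CPsi) ->
  (forall x, (eta t.+1 x)^-1 - (eta t x)^-1 <= lambda1) ->
  (1 <= t <= T)%N -> (1 <= h <= H)%N ->
  q t h <= ltil t h (acts t h) * mu t (xs t h) (acts t h) + lambda1 * CPsi.
Proof.
move=> C_bound lambda_bound tT hH; set x := xs t h.
have pol_t : policy (mu t) by apply: run_policy; lia.
have [_ on_traj _] := run.2 t tT.
have [_ _ argmin _ ->] := on_traj h hH.
apply: le_trans (argmin _ (pol_t x)) _.
rewrite /hobj breg_self mulr0 addr0 dotv_ltilde lerD2l.
have [eta_pos [eta_noninc _]] := rates x.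
have delta_ge0 : 0 <= (eta t.+1 x)^-1 - (eta t x)^-1.
  by rewrite subr_ge0 lef_pV2 ?posrE ?eta_noninc ?eta_pos //; lia.
have C_ge0 : 0 <= CPsi.
  by apply: (bregman_radius_ge0 _ (C_bound x)); apply: run_policy; lia.
apply: le_trans (_ : _ <= ((eta t.+1 x)^-1 - (eta t x)^-1) * CPsi) _.
  by rewrite ler_wpM2l ?C_bound.
by rewrite ler_wpM2r.
Qed.
Arguments q_step_bound {CPsi lambda1 t h}.

Lemma cumulated_loss_bound (CPsi lambda1 : R) t h :
  trajectories dep par H T xs acts loss ->
  (forall x a, 0 < mus x a) ->
  (forall x p, in_simplex p -> breg (Psi x) (gPsi x) p (mu 1%N x) <= CPsi) ->
  0 <= CPsi -> 0 <= lambda1 ->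
  (forall x, (eta t.+1 x)^-1 - (eta t x)^-1 <= lambda1) ->
  (1 <= t <= T)%N -> (1 <= h <= H)%N ->
  loss t h + q t h.+1 <= (1 + lambda1 * CPsi) * \sum_(h <= k < H.+1)
    \prod_(h.+1 <= j < k.+1) (mu t (xs t j) (acts t j) / mus (xs t j) (acts t j)).
Proof.
move=> traj mus_pos C_bound C_ge0 lambda_ge0 lambda_bound tT hH.
have [traj_t _] := traj t tT.
have pol_t : policy (mu t) by apply: run_policy; lia.
pose S j := loss t j + q t j.+1.
pose r j := mu t (xs t j) (acts t j) / mus (xs t j) (acts t j).
apply: (backward_sum_bound S r); [exact: mulr_ge0 | | | | lia].
- move=> j; apply: divr_ge0; [by case: (pol_t (xs t j)) | exact/ltW].
- rewrite /S; have [-> _ _] := run.2 t tT; rewrite addr0.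
  by have [_ /andP[]] := traj_t H (ltac:(lia)).
- move=> j hj; have [_ /andP[_ loss_le1]] := traj_t j (ltac:(lia)).
  have := q_step_bound C_bound lambda_bound tT (ltac:(lia) : (1 <= j.+1 <= H)%N).
  have -> : ltil t j.+1 (acts t j.+1) * mu t (xs t j.+1) (acts t j.+1) = r j.+1 * S j.+1.
    by rewrite /ltilde eqxx /r /S; ring.
  by move=> q_le; rewrite [S j]/S; lra.
Qed.

End Run.

Arguments run_policy {R X A dep H T Omega Psi gPsi mus eta xs acts loss mu q}.
Arguments cumulated_loss_bound {R X A dep par H T Omega Psi gPsi mus eta xs acts loss mu q}
  dep_range run rates {CPsi lambda1 t h}.

Theorem mainTheorem4 (R : realType) (X : finType) (A : X -> finType)
  (dep : X -> nat) (par : X -> option {x : X & A x}) (H T : nat)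
  (Omega : forall x, set (A x -> R))
  (Psi : forall x, (A x -> R) -> R) (gPsi : forall x, (A x -> R) -> (A x -> R))
  (mus : forall x, A x -> R) (eta : nat -> X -> R)
  (xs : nat -> nat -> X) (acts : forall t h, A (xs t h)) (loss : nat -> nat -> R)
  (mu : nat -> forall x, A x -> R) (q : nat -> nat -> R)
  (CPsi lambda1 : R) :
  (1 <= H)%N ->
  game_structure dep par H ->
  (forall x, admissible_domain (Omega x) /\ legendre (Omega x) (Psi x) (gPsi x)) ->
  policy mus -> (forall x a, 0 < mus x a) ->
  trajectories dep par H T xs acts loss ->
  learning_rates dep T xs eta ->
  localOMD_run dep H T Omega Psi gPsi mus eta xs acts loss mu q ->
  (forall x p, in_simplex p -> breg (Psi x) (gPsi x) p (mu 1%N x) <= CPsi) ->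
  0 <= lambda1 ->
  (forall x t, (1 <= t <= T)%N -> (eta t.+1 x)^-1 - (eta t x)^-1 <= lambda1) ->
  forall t h, (1 <= t <= T)%N -> (1 <= h <= H)%N ->
    ltilde mus xs acts loss q t h (acts t h)
      <= (1 + lambda1 * CPsi) * kappa dep par mus (xs t h).
Proof.
move=> _ [dep_range _ _] _ _ mus_pos traj rates run C_bound lambda_ge0 lambda_bound
  t h tT hH.
have [traj_t par_t] := traj t tT.
have C_ge0 : 0 <= CPsi.
  by apply: (bregman_radius_ge0 _ (C_bound (xs t h))); apply: (run_policy dep_range run).
have loss_bound := cumulated_loss_bound dep_range run rates traj mus_pos C_bound C_ge0
  lambda_ge0 (fun x => lambda_bound x t tT) tT hH.
have inv_mus_ge0 : 0 <= (mus (xs t h) (acts t h))^-1 by rewrite invr_ge0 ltW.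
rewrite /ltilde eqxx; apply: le_trans (ler_wpM2r inv_mus_ge0 loss_bound) _.
rewrite -mulrA; apply: ler_wpM2l; first by rewrite addr_ge0 ?mulr_ge0.
rewrite big_distrl /=; apply: (kappa_ge_traj (fun j jH => (traj_t j jH).1) par_t).
- by move=> y b; apply/ltW/mus_pos.
- by apply: (run_policy dep_range run); lia.
- by [].
Qed.
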